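(* Let $n\ge3$ be odd, $R\in\mathbb{Q}$ not a square, $\zeta$ a primitive $n$th root of unity in $\mathbb{C}$, and $K=\mathbb{Q}(\sqrt R(\zeta-\zeta^{-1}))$. Then $\mathrm{Gal}(K/\mathbb{Q})\cong(\mathbb{Z}/n\mathbb{Z})^\times$, except in the case $R<0$ and $\sqrt R\in\mathbb{Q}(\zeta)$, where $\mathrm{Gal}(K/\mathbb{Q})\cong(\mathbb{Z}/n\mathbb{Z})^\times/\{\pm1\}$. *)

From HB Require Import structures.
From mathcomp Require Import all_boot all_order all_algebra all_fingroup all_solvable all_field.
Set Implicit Arguments. Unset Strict Implicit. Unset Printing Implicit Defensive.
Import GRing.Theory Num.Theory.
Local Open Scope ring_scope.

Definition Zp_pm1 (n : nat) : {set {unit 'Z_n}} :=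
  [set u : {unit 'Z_n} | (val u == 1) || (val u == -1)].

(* y belongs to the subfield Q(z) of algC: y is a rational polynomial in z. *)
Definition in_Qgen (z y : algC) : Prop :=
  exists p : {poly rat}, (map_poly ratr p).[z] = y.

From HB Require Import structures.
From mathcomp Require Import all_boot all_order all_algebra all_fingroup all_solvable all_field.
From mathcomp Require Import ring.
Import Order.TTheory GRing.Theory Num.Theory.
Local Open Scope ring_scope.

(* Write [s] for
   [sqrt R] and [w k = s (z^k - z^-k)], so that [K] is generated by [w 1].
   - Section [TwistedDifference]: on [n]-th roots of unity ([n] odd) the map
     [t |-> s (t - 1/t)] is injective, and for odd [m] a Chebyshev-type
     rational polynomial [P_m] satisfies [P_m (s (t - 1/t)) = s (t^m - t^-m)];
     so every [w k] is a rational polynomial in [w 1].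
   - Section [AlgCAutomorphisms]: automorphisms of [algC] fix or negate [s],
     automorphisms agreeing on [z] agree on [Q(z)], complex conjugation inverts
     [z], and if [s] is not in [Q(z)] some automorphism fixes [z] and negates
     [s].
   - Section [GaloisGroup]: every automorphism of [algC] maps [w 1] to some
     [w u], [u] a unit of ['Z_n]; as [w u = P_u(w 1)] lies in [K], this gives
     an injective morphism [Gal(K/Q) -> ('Z_n)^*] whose image [H] contains [u]
     or [-u] for every unit [u].  Hence [H] is everything if [-1] is in [H],
     and otherwise a complement of [{1, -1}], isomorphic to the quotient.
     Finally [-1] is in [H] iff some automorphism negates [w 1]: complex
     conjugation does when [R > 0], the automorphism above when [s] is not in
     [Q(z)], and none does when [R < 0] and [s] is in [Q(z)]. *)

Section TwistedDifference.
Context {F : numFieldType}.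
Implicit Types (s t a b : F) (c : rat).

(* The twisted difference [s * (t - 1/t)]; for [t] a root of unity and [s] a
   square root these are the conjugates of the generator of the field. *)
Definition tdiff s t : F := s * (t - t^-1).

Lemma unity_neq0 {n : nat} {t : F} : (0 < n)%N -> t ^+ n = 1 -> t != 0.
Proof.
by move=> n0 tn1; apply: contra_eq_neq tn1 => ->; rewrite expr0n gtn_eqF // eq_sym oner_eq0.
Qed.

Lemma tdiffV s t : tdiff s t^-1 = - tdiff s t.
Proof. by rewrite /tdiff invrK -mulrN opprB. Qed.

(* For odd [n], the twisted difference is injective on the [n]-th roots of
   unity: [(a - b)(ab + 1) = ab ((a - 1/a) - (b - 1/b))], and [ab = -1]
   would force [(-1)^n = 1]. *)
Lemma tdiff_unity_inj {n : nat} {s a b : F} : odd n -> s != 0 ->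
  a ^+ n = 1 -> b ^+ n = 1 -> tdiff s a = tdiff s b -> a = b.
Proof.
move=> n_odd s0 an1 bn1 /(mulfI s0) eq_ab.
have a0 := unity_neq0 (odd_gt0 n_odd) an1; have b0 := unity_neq0 (odd_gt0 n_odd) bn1.
have : (a - b) * (a * b + 1) = 0.
  have -> : (a - b) * (a * b + 1) = (a * b) * ((a - a^-1) - (b - b^-1)).
    by field; rewrite a0 b0.
  by rewrite eq_ab subrr mulr0.
move/eqP; rewrite mulf_eq0 subr_eq0 addr_eq0 => /orP[/eqP // | /eqP ab_m1].
have : (-1 : F) ^+ n = 1 by rewrite -ab_m1 exprMn an1 bn1 mulr1.
rewrite -signr_odd n_odd expr1 => /eqP.
by rewrite eq_sym -addr_eq0 -mulr2n mulrn_eq0 oner_eq0.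
Qed.

(* The pairs [(P_(2j-1), P_(2j+1))] of rational polynomials such that
   [P_m (tdiff s t) = tdiff s (t ^+ m)] whenever [s ^+ 2 = c]; they follow
   the Chebyshev-type recurrence [P_(m+2) = (X^2/c + 2) P_m - P_(m-2)]. *)
Fixpoint oddpow_pair c (j : nat) : {poly rat} * {poly rat} :=
  if j is j'.+1 then let pq := oddpow_pair c j' in
    (pq.2, (c^-1 *: 'X^2 + 2%:P) * pq.2 - pq.1)
  else (- 'X, 'X).

Definition oddpow_poly c (m : nat) : {poly rat} := (oddpow_pair c m./2).2.

Lemma oddpow_pairE c s t j : s ^+ 2 = ratr c -> s != 0 -> t != 0 ->
  (map_poly ratr (oddpow_pair c j).1).[tdiff s t] = tdiff s (t ^+ (2 * j) / t) /\
  (map_poly ratr (oddpow_pair c j).2).[tdiff s t] = tdiff s (t ^+ (2 * j).+1).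
Proof.
rewrite /tdiff => s2 s0 t0; elim: j => [|j [IH1 IH2]] /=.
  rewrite rmorphN /= map_polyX hornerN hornerX muln0 expr0 mul1r invrK.
  by split; field.
have e2 : t ^+ (2 * j.+1) = t ^+ 2 * t ^+ (2 * j) by rewrite -exprD mulnS.
have e3 : t ^+ (2 * j.+1).+1 = t ^+ 3 * t ^+ (2 * j) by rewrite -exprD mulnS addSn.
rewrite e2 e3 exprS in IH2 *; have u0 : t ^+ (2 * j) != 0 by rewrite expf_neq0.
move: u0 IH1 IH2; set u := t ^+ (2 * j) => u0 IH1 IH2; split.
  by rewrite IH2; field; rewrite u0 t0.
rewrite rmorphB rmorphM rmorphD /= map_polyZ map_polyXn map_polyC /= rmorph_nat.
rewrite hornerD hornerN hornerM hornerD hornerZ hornerXn hornerC IH1 IH2.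
rewrite fmorphV (_ : GRing.RMorphism.sort _ c = s ^+ 2); last exact: esym s2.
by field; rewrite u0 t0 s0.
Qed.

Lemma oddpow_polyE c s t m : s ^+ 2 = ratr c -> s != 0 -> t != 0 -> odd m ->
  (map_poly ratr (oddpow_poly c m)).[tdiff s t] = tdiff s (t ^+ m).
Proof.
move=> s2 s0 t0 m_odd; have [_ ->] := oddpow_pairE c s t (m./2) s2 s0 t0.
by rewrite -{2}(odd_double_half m) m_odd add1n mul2n.
Qed.

(* On [n]-th roots of unity with [n] odd, every power is given by such a
   polynomial: replace an even exponent [k] by the odd [k + n]. *)
Definition pow_poly c (n k : nat) : {poly rat} :=
  oddpow_poly c (if odd k then k else k + n).

Lemma pow_polyE c (n k : nat) s t : odd n -> s ^+ 2 = ratr c -> s != 0 ->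
  t ^+ n = 1 -> (map_poly ratr (pow_poly c n k)).[tdiff s t] = tdiff s (t ^+ k).
Proof.
move=> n_odd s2 s0 tn1.
have t0 := unity_neq0 (odd_gt0 n_odd) tn1.
rewrite /pow_poly; case: ifP => k_odd; first exact: oddpow_polyE.
by rewrite oddpow_polyE // ?exprD ?tn1 ?mulr1 // oddD n_odd k_odd.
Qed.

End TwistedDifference.

Lemma minPoly_sqrt {F0 : fieldType} {L : fieldExtType F0} {K : {subfield L}} {y : L} :
  y \notin K -> y ^+ 2 \in K -> minPoly K y = 'X^2 - (y ^+ 2)%:P.
Proof.
move=> yNK y2K; set q := 'X^2 - _.
have q_monic : q \is monic by rewrite monicXnsubC.
have q_size : size q = 3%N.
  by rewrite size_polyDl ?size_polyXn // size_polyN size_polyC; case: eqP.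
have dvd_q : minPoly K y %| q.
  apply: minPoly_dvdp; last by rewrite rootE !hornerE subrr.
  by rewrite rpredB ?rpredX ?polyOverX ?polyOverC.
apply/eqP; rewrite -eqp_monic ?monic_minPoly // -dvdp_size_eqp // q_size size_minPoly.
have : (size (minPoly K y) <= 3)%N by rewrite -q_size dvdp_leq ?monic_neq0.
rewrite size_minPoly; move: (adjoin_deg_eq1 K y); rewrite (negPf yNK).
rewrite /adjoin_degree; set d := _.-1.
by case: d => [|[|[|d]]].
Qed.

Section AlgCAutomorphisms.
Implicit Types (nu mu : {rmorphism algC -> algC}).

Lemma aut_sqrt_rat nu {y : algC} {q : rat} : y ^+ 2 = ratr q -> nu y = y \/ nu y = - y.
Proof.
move=> y2; have : nu y ^+ 2 == y ^+ 2 by rewrite -rmorphXn y2 fmorph_rat.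
by rewrite eqf_sqr => /orP[] /eqP; [left | right].
Qed.

Lemma aut_Qgen {nu mu} {z y : algC} : in_Qgen z y -> nu z = mu z -> nu y = mu y.
Proof.
move=> [p <-] nu_mu_z; rewrite -!horner_map /= nu_mu_z.
by rewrite -!map_poly_comp; congr (_.[_]); apply: eq_map_poly => r /=; rewrite !fmorph_rat.
Qed.

Lemma conj_unity {n : nat} {z : algC} : (0 < n)%N -> z ^+ n = 1 -> z^* = z^-1.
Proof.
move=> n0 zn1; have z1 : `|z| = 1.
  by apply/eqP; rewrite -(pexpr_eq1 n0) ?normr_ge0 // -normrX zn1 normr1.
by rewrite invC_norm z1 expr1n invr1 mul1r.
Qed.

Lemma conj_sqrt_ge0 {q : rat} : 0 <= q -> (sqrtC (ratr q : algC))^* = sqrtC (ratr q).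
Proof. by move=> q_ge0; rewrite conj_Creal // sqrtC_real // ler0q. Qed.

Lemma conj_sqrt_lt0 {y : algC} {q : rat} : q < 0 -> y ^+ 2 = ratr q -> y^* = - y.
Proof.
move=> q_lt0 y2; case: (aut_sqrt_rat Num.Def.conjC y2) => // y_real.
have : 0 <= y ^+ 2 by rewrite expr2 -{2}y_real -normCK exprn_ge0.
by rewrite y2 ler0q leNgt q_lt0.
Qed.

(* A square root [y] of a rational outside [Q(z)] can be negated by an
   automorphism fixing [z]: extend the nontrivial automorphism of
   [Q(z, y) / Q(z)] to [algC]. *)
Lemma flip_sqrt {z y : algC} {q : rat} : y ^+ 2 = ratr q -> ~ in_Qgen z y ->
  exists nu, nu z = z /\ nu y = - y.
Proof.
move=> y2 yNQz.
have [Qzy [QzyC [[|zq [|yq []]] // [Dz Dy]] gen_Qzy]] := num_field_exists [:: z; y].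
pose F := <<1; zq>>%AS.
have yqNF : yq \notin F.
  apply/negP => /Fadjoin_polyP [p /polyOver1P[p' ->] yq_p]; apply: yNQz.
  exists p'; rewrite -Dy yq_p -Dz -horner_map -map_poly_comp; congr (_.[_]).
  by apply: eq_map_poly => r /=; rewrite alg_num_field fmorph_rat.
have yq2 : yq ^+ 2 = q%:A.
  by apply: (fmorph_inj QzyC); rewrite rmorphXn Dy y2 alg_num_field fmorph_rat.
have yq_minPoly : minPoly F yq = 'X^2 - (q%:A)%:P.
  by rewrite (minPoly_sqrt yqNF) ?yq2 // rpredZ ?mem1v.
have root_opp : root (map_poly \1%VF (minPoly F yq)) (- yq).
  by rewrite lfun1_poly yq_minPoly rootE !hornerE sqrrN yq2 subrr.
have homF : kHom F F \1 by rewrite kHom1.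
pose phi := kHomExtend F \1 yq (- yq).
have full : <<F; yq>>%VS = fullv by rewrite -gen_Qzy adjoin_cons adjoin_seq1.
have phiM : monoid_morphism phi.
  apply/kHom_monoid_morphism; rewrite -full.
  exact: kHomSl (sub1v F) (kHomExtendP (subvv F) homF root_opp).
pose phiRM : {rmorphism _ -> _} :=
  HB.pack (fun_of_lfun phi) (GRing.isMonoidMorphism.Build _ _ phi phiM).
have [nu Dnu] := extend_algC_subfield_aut QzyC phiRM.
exists nu; split.
  by rewrite -Dz -Dnu /= kHomExtend_id ?memv_adjoin // id_lfunE.
by rewrite -Dy -Dnu /= (kHomExtend_val homF root_opp) rmorphN.
Qed.

End AlgCAutomorphisms.

Lemma complement_isog_quotient (gT : finGroupType) (G H P : {group gT}) :
  abelian G -> P \subset G -> H \subset G -> (H * P)%g = G -> (H :&: P = 1)%g ->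
  (H \isog G / P)%g.
Proof.
move=> abG sPG sHG defG tiHP.
have nPH : H \subset 'N(P)%g := subset_trans sHG (sub_abelian_norm abG sPG).
by apply: sdprod_isog; rewrite -defG (normC nPH) sdprodE // setIC.
Qed.

Section RationalPolynomials.
Variable L : splittingFieldType rat.
Implicit Types (p : {poly rat}) (y : L).

Lemma iota_qpoly (iota : {rmorphism L -> algC}) p y :
  iota (map_poly (in_alg L) p).[y] = (map_poly ratr p).[iota y].
Proof.
rewrite -horner_map -map_poly_comp; congr (_.[_]); apply: eq_map_poly => r /=.
by rewrite alg_num_field fmorph_rat.
Qed.

Lemma gal_qpoly (E : {subfield L}) (g : gal_of E) p y :
  g (map_poly (in_alg L) p).[y] = (map_poly (in_alg L) p).[g y].
Proof.
rewrite -horner_map -map_poly_comp; congr (_.[_]); apply: eq_map_poly => r /=.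
by rewrite linearZ /= rmorph1.
Qed.

End RationalPolynomials.

Section GaloisGroup.
Variables (n : nat) (R : rat) (z : algC) (L : splittingFieldType rat)
  (iota : {rmorphism L -> algC}) (x : L).
Hypotheses (n_ge3 : (3 <= n)%N) (n_odd : odd n) (R_nsq : ~ exists q : rat, q ^+ 2 = R)
  (prim_z : n.-primitive_root z) (iota_x : iota x = sqrtC (ratr R) * (z - z^-1)).

Local Notation s := (sqrtC (ratr R : algC)).
Local Notation E := <<1; x>>%VS.
Implicit Types (k l : nat) (u v : {unit 'Z_n}) (g h : gal_of E)
  (nu : {rmorphism algC -> algC}).

Let n_gt1 : (1 < n)%N. Proof. exact: leq_trans n_ge3. Qed.
Let n_gt0 : (0 < n)%N. Proof. exact: ltnW. Qed.
Let s2 : s ^+ 2 = ratr R. Proof. exact: sqrtCK. Qed.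
Let s_neq0 : s != 0.
Proof.
apply: contra_not_neq R_nsq => s0; exists 0.
have /eqP : ratr R = 0 :> algC by rewrite -s2 s0 expr0n.
by rewrite fmorph_eq0 => /eqP ->; rewrite expr0n.
Qed.

Definition w k : algC := tdiff s (z ^+ k).

Lemma iota_xE : iota x = w 1.
Proof. by rewrite iota_x /w expr1. Qed.

Lemma w_mod k : w (k %% n)%N = w k.
Proof. by rewrite /w (prim_expr_mod prim_z). Qed.

Let zk_unity k : (z ^+ k) ^+ n = 1.
Proof. by rewrite -exprM mulnC exprM (prim_expr_order prim_z) expr1n. Qed.

Lemma w_inj k l : w k = w l -> z ^+ k = z ^+ l.
Proof.
exact: tdiff_unity_inj n_odd s_neq0 (zk_unity k) (zk_unity l).
Qed.

Lemma z_exp_opp k : z ^+ (k * n.-1) = (z ^+ k)^-1.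
Proof.
have zk0 : z ^+ k != 0 := unity_neq0 n_gt0 (zk_unity k).
by rewrite exprM; apply: (mulIf zk0); rewrite -exprSr prednK // zk_unity mulVf.
Qed.

Lemma w_opp k : w (k * n.-1) = - w k.
Proof. by rewrite /w z_exp_opp tdiffV. Qed.

(* Every automorphism of [algC] maps [iota x] to some [w k], [k] prime to [n]:
   it raises [z] to a power prime to [n] and fixes or negates [s]. *)
Lemma aut_iota_x nu : exists2 k, coprime k n & nu (iota x) = w k.
Proof.
have [k ck nuz] := aut_prim_rootP nu prim_z.
have nu_x : nu (iota x) = nu s * (z ^+ k - (z ^+ k)^-1).
  by rewrite iota_x rmorphM rmorphB fmorphV nuz.
case: (aut_sqrt_rat nu s2) => nus; first by exists k => //; rewrite nu_x nus.
exists (k * n.-1)%N; first by rewrite coprimeMl ck coprimePn.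
by rewrite w_opp nu_x nus mulNr.
Qed.

Definition Zp_unit k : {unit 'Z_n} := insubd (1%g : {unit 'Z_n}) (k%:R : 'Z_n).

Lemma Zp_unitE k : coprime k n -> val (val (Zp_unit k)) = (k %% n)%N.
Proof.
move=> ck; rewrite /Zp_unit insubdK; last by rewrite unitZpE // coprime_sym.
exact: val_Zp_nat.
Qed.

Definition wu u : algC := w (val u).

Lemma wu_Zp_unit k : coprime k n -> wu (Zp_unit k) = w k.
Proof. by move=> ck; rewrite /wu Zp_unitE // w_mod. Qed.

Lemma aut_unit nu : exists u, nu (iota x) = wu u.
Proof. by have [k ck ->] := aut_iota_x nu; exists (Zp_unit k); rewrite wu_Zp_unit. Qed.

Lemma wu_inj : injective wu.
Proof.
have lt_n (a : 'Z_n) : (a < n)%N by rewrite -[n in (_ < n)%N](Zp_cast n_gt1) ltn_ord.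
move=> u v /w_inj /eqP; rewrite (eq_prim_root_expr prim_z) !modn_small ?lt_n //.
by move=> /eqP uv; apply/val_inj/val_inj.
Qed.

Lemma wuM u v : wu (u * v)%g = w (val u * val v)%N.
Proof.
rewrite /wu FinRing.val_unitM.
have -> : val u * val v = ((val u : nat) * (val v : nat))%:R :> 'Z_n.
  by rewrite natrM !natr_Zp.
by rewrite val_Zp_nat // w_mod.
Qed.

Definition m1 : {unit 'Z_n} := Zp_unit n.-1.

Lemma m1E : val m1 = -1.
Proof.
rewrite /m1 /Zp_unit insubdK; last by rewrite unitZpE // coprimenP.
by apply/eqP; rewrite -addr_eq0 -mulrSr prednK // pchar_Zp.
Qed.

Lemma wu_m1 u : wu (u * m1)%g = - wu u.
Proof.
by rewrite wuM Zp_unitE ?coprimePn // modn_small ?prednK // w_opp.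
Qed.

Lemma m1_sqr : (m1 * m1 = 1)%g.
Proof. by apply: wu_inj; rewrite wu_m1 -[m1]mul1g wu_m1 opprK. Qed.

Lemma Zp_pm1E u : (u \in Zp_pm1 n) = (u == 1%g) || (u == m1).
Proof. by rewrite inE -m1E -(FinRing.val_unit1 'Z_n) !(inj_eq val_inj). Qed.

Lemma Zp_pm1_group : group_set (Zp_pm1 n).
Proof.
apply/group_setP; split=> [|u v]; first by rewrite Zp_pm1E eqxx.
by rewrite !Zp_pm1E => /orP[]/eqP-> /orP[]/eqP->;
  rewrite ?mul1g ?mulg1 ?m1_sqr eqxx ?orbT.
Qed.

Definition xpow k : L := (map_poly (in_alg L) (pow_poly R n k)).[x].

Lemma pow_poly_w k l : (map_poly ratr (pow_poly R n k)).[w l] = w (l * k).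
Proof. by rewrite pow_polyE // -exprM. Qed.

Lemma iota_xpow k : iota (xpow k) = w k.
Proof. by rewrite iota_qpoly iota_xE pow_poly_w mul1n. Qed.

Lemma xpow_in_E k : xpow k \in E.
Proof.
apply/mempx_Fadjoin/polyOverP => i; rewrite coef_map /=.
by rewrite rpredZ ?mem1v.
Qed.

Definition gal_index g : {unit 'Z_n} :=
  odflt 1%g [pick u | iota (g x) == wu u].

(* [gal_index] is well defined since [g] extends to an automorphism of
   [algC]; it determines [g x] and is an injective group morphism (note that
   [(g * h) x = h (g x)]). *)

Lemma gal_indexP g : iota (g x) = wu (gal_index g).
Proof.
have [nu nu_g] := extend_algC_subfield_aut iota (gal_repr g).
have [u nu_x] := aut_unit nu.
rewrite /gal_index; case: pickP => [v /eqP // | /(_ u)].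
by rewrite nu_g nu_x eqxx.
Qed.

Lemma gal_x g : g x = xpow (val (gal_index g)).
Proof. by apply: (fmorph_inj iota); rewrite iota_xpow gal_indexP. Qed.

Lemma gal_index_morph : {in 'Gal(E / 1)%g &, {morph gal_index : g h / (g * h)%g}}.
Proof.
move=> g h _ _; apply: wu_inj; rewrite -gal_indexP galM ?memv_adjoin // gal_x.
by rewrite gal_qpoly iota_qpoly gal_indexP pow_poly_w wuM mulnC.
Qed.

Lemma gal_index_inj : {in 'Gal(E / 1)%g &, injective gal_index}.
Proof.
move=> g h Gg Gh eq_gh; apply/eqP; rewrite gal_adjoin_eq //; apply/eqP.
by apply: (fmorph_inj iota); rewrite !gal_indexP eq_gh.
Qed.

(* Every automorphism of [algC] restricts on [iota x] to an element of the
   Galois group: the image [w k] is [iota] of the root [P_k(x)] of the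
   minimal polynomial of [x], which lies in [E]. *)
Lemma gal_realize nu :
  exists2 g, g \in 'Gal(E / 1)%g & iota (g x) = nu (iota x).
Proof.
have [k _ nu_x] := aut_iota_x nu.
have root_xpow : root (minPoly 1 x) (xpow k).
  apply/eqP/(fmorph_inj iota); rewrite rmorph0 -horner_map iota_xpow -nu_x.
  rewrite -(map_Qnum_poly iota nu (minPolyOver 1 x)) map_poly_comp horner_map /=.
  by rewrite horner_map /= (eqP (root_minPoly 1 x)) !rmorph0.
have [g0 _ g0_x] :=
  normalField_root_minPoly (sub1v _) (normalFieldf 1) (memvf x) root_xpow.
have : kAut 1 E g0.
  by rewrite kAut1E aimg_adjoin aimg1 g0_x; apply/FadjoinP; rewrite sub1v xpow_in_E.
case/kAut_to_gal => g Gg g_g0; exists g => //.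
by rewrite -g_g0 ?memv_adjoin // g0_x iota_xpow.
Qed.

Lemma wu1 : wu 1%g = iota x.
Proof. by rewrite iota_xE /wu FinRing.val_unit1 /= -(Zp_cast n_gt1). Qed.

Definition gal_indexm := Morphism gal_index_morph.

Lemma gal_index_injm : ('injm gal_indexm)%g.
Proof. exact/injmP/gal_index_inj. Qed.

Local Notation H := (gal_indexm @* 'Gal(E / 1))%G.

Lemma gal_isog_image : ('Gal(E / 1) \isog H)%g.
Proof. by apply/isogP; exists gal_indexm => //; apply: gal_index_injm. Qed.

(* For every unit [u], either [u] or [-u] is in the image: an automorphism
   of [algC] raising [z] to the power [u] fixes or negates [s]. *)
Lemma image_cover u : u \in H \/ (u * m1)%g \in H.
Proof.
have cu : coprime (val u) n.
  by rewrite coprime_sym -unitZpE // natr_Zp; apply: (valP u).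
have [nu nu_z] := Qn_aut_exists cu.
have [g Gg g_x] := gal_realize nu.
have nu_x : nu (iota x) = nu s * (z ^+ val u - (z ^+ val u)^-1).
  by rewrite iota_x rmorphM rmorphB fmorphV (nu_z z (prim_expr_order prim_z)).
have gH : gal_index g \in H by apply: mem_morphim.
case: (aut_sqrt_rat nu s2) => nu_s; [left | right].
  suff -> : u = gal_index g by [].
  by apply: wu_inj; rewrite -gal_indexP g_x nu_x nu_s.
suff -> : (u * m1)%g = gal_index g by [].
by apply: wu_inj; rewrite -gal_indexP g_x nu_x nu_s wu_m1 /wu /w mulNr.
Qed.

Lemma m1_image_of_aut nu : nu (iota x) = - iota x -> m1 \in H.
Proof.
move=> nu_x; have [g Gg g_x] := gal_realize nu.
suff <- : gal_index g = m1 by apply: mem_morphim.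
by apply: wu_inj; rewrite -gal_indexP g_x nu_x -[m1]mul1g wu_m1 wu1.
Qed.

Lemma aut_of_m1_image : m1 \in H -> exists nu, nu (iota x) = - iota x.
Proof.
case/morphimP => g _ Gg m1_g; have g_m1 : gal_index g = m1 by rewrite m1_g.
have [nu nu_g] := extend_algC_subfield_aut iota (gal_repr g).
by exists nu; rewrite -nu_g gal_indexP /= g_m1 -[m1]mul1g wu_m1 wu1.
Qed.

(* For [R > 0], complex conjugation negates [iota x]. *)
Lemma m1_image_pos : 0 < R -> m1 \in H.
Proof.
move=> R_gt0; apply: (m1_image_of_aut Num.Def.conjC).
rewrite iota_x rmorphM rmorphB fmorphV /= (conj_sqrt_ge0 (ltW R_gt0)).
by rewrite (conj_unity n_gt0 (prim_expr_order prim_z)) invrK -mulrN opprB.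
Qed.

(* If [s] is not in [Q(z)], negating [s] while fixing [z] negates [iota x]. *)
Lemma m1_image_flip : ~ in_Qgen z s -> m1 \in H.
Proof.
move=> sNQz; have [nu [nu_z nu_s]] := flip_sqrt s2 sNQz.
by apply: (m1_image_of_aut nu); rewrite iota_x rmorphM rmorphB fmorphV nu_z nu_s mulNr.
Qed.

(* If [R < 0] and [s] is in [Q(z)], no automorphism negates [iota x]: it
   would either fix [s] and act on [z] as complex conjugation, which negates
   [s], or negate [s] and fix [z], hence fix [s]. *)
Lemma m1_notin_image : R < 0 -> in_Qgen z s -> m1 \notin H.
Proof.
move=> R_lt0 sQz; apply/negP => /aut_of_m1_image [nu nu_x].
have [k _ nu_z] := aut_prim_rootP nu prim_z.
have nu_xk : nu (iota x) = nu s * (z ^+ k - (z ^+ k)^-1).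
  by rewrite iota_x rmorphM rmorphB fmorphV nu_z.
have s_neq_opp : s != - s.
  by rewrite -addr_eq0 -mulr2n mulrn_eq0 negb_or s_neq0.
case: (aut_sqrt_rat nu s2) => nu_s; apply: (negP s_neq_opp); apply/eqP.
  have zk : z ^+ k = z ^+ (1 * n.-1).
    by apply: w_inj; rewrite w_opp -iota_xE -nu_x nu_xk nu_s.
  have nu_conj : nu z = z^*.
    by rewrite nu_z zk z_exp_opp expr1 (conj_unity n_gt0 (prim_expr_order prim_z)).
  by rewrite -[LHS]nu_s (aut_Qgen sQz nu_conj); apply: conj_sqrt_lt0 R_lt0 s2.
have zk : z ^+ k = z ^+ 1.
  by apply: w_inj; apply: oppr_inj; rewrite -iota_xE -nu_x nu_xk nu_s mulNr.
have nu_id : nu z = idfun z by rewrite nu_z zk expr1.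
by rewrite -nu_s (aut_Qgen sQz nu_id).
Qed.

Lemma gal_isog_units : m1 \in H -> ('Gal(E / 1) \isog units_Zp n)%g.
Proof.
move=> m1H; suff -> : units_Zp n = H by apply: gal_isog_image.
apply/eqP; rewrite eqEsubset subsetT andbT; apply/subsetP => u _.
case: (image_cover u) => // umH.
by rewrite -[u]mulg1 -m1_sqr mulgA groupM.
Qed.

(* Otherwise the image is a complement of [{1, -1}] in the units. *)
Lemma gal_isog_quotient : m1 \notin H ->
  ('Gal(E / 1) \isog units_Zp n / Zp_pm1 n)%g.
Proof.
move=> m1NH; apply: isog_trans gal_isog_image _.
pose P := Group Zp_pm1_group.
apply: (@complement_isog_quotient _ [set: {unit 'Z_n}]%G H P); rewrite ?subsetT //.
- exact: units_Zp_abelian.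
- apply/eqP; rewrite eqEsubset subsetT; apply/subsetP => u _.
  case: (image_cover u) => uH; first by rewrite -[u]mulg1 mem_mulg // Zp_pm1E eqxx.
  by rewrite -[u]mulg1 -m1_sqr mulgA mem_mulg // Zp_pm1E eqxx orbT.
- apply/eqP; rewrite eqEsubset sub1G andbT; apply/subsetP => u.
  rewrite inE Zp_pm1E => /andP[uH /orP[] /eqP u_eq]; first by rewrite u_eq inE.
  by rewrite -u_eq uH in m1NH.
Qed.

Lemma gal_isog_exceptional : R < 0 -> in_Qgen z s ->
  ('Gal(E / 1) \isog units_Zp n / Zp_pm1 n)%g.
Proof. by move=> R_lt0 sQz; apply/gal_isog_quotient/m1_notin_image. Qed.

Lemma gal_isog_generic : ~ (R < 0 /\ in_Qgen z s) -> ('Gal(E / 1) \isog units_Zp n)%g.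
Proof.
move=> not_exc; apply: gal_isog_units; have [R_lt0 | R_gt0 | R0] := ltgtP R 0.
- by apply: m1_image_flip => sQz; apply: not_exc.
- exact: m1_image_pos.
- by case: R_nsq; exists 0; rewrite R0 expr0n.
Qed.

End GaloisGroup.

Theorem proposition4 (n : nat) (R : rat) (z : algC)
    (L : splittingFieldType rat) (iota : {rmorphism L -> algC}) (x : L) :
  (3 <= n)%N -> odd n ->
  ~ (exists q : rat, q ^+ 2 = R) ->
  n.-primitive_root z ->
  iota x = sqrtC (ratr R) * (z - z^-1) ->
  ((R < 0) /\ in_Qgen z (sqrtC (ratr R)) ->
     ('Gal(<<1; x>>%VS / 1%VS) \isog (units_Zp n / Zp_pm1 n))%g) /\
  (~ ((R < 0) /\ in_Qgen z (sqrtC (ratr R))) ->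
     ('Gal(<<1; x>>%VS / 1%VS) \isog units_Zp n)%g).
Proof.
move=> n_ge3 n_odd R_nsq prim_z iota_x; split.
  by case; apply: (@gal_isog_exceptional n R z L iota x).
by apply: (@gal_isog_generic n R z L iota x).
Qed.
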